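(* Let $\mathbb{F}$ be an algebraically closed field with $\mathrm{char}\,\mathbb{F}=2$ and $n\ge4$. Let $\underline{a}=(e_1,e_2,\mathbf{u}_1,\mathbf{v}_1,0,\ldots,0)\in\mathbb{M}^n$ and let $\underline{b}\in\mathbb{M}^n$ be such that $f(\underline{a})=f(\underline{b})$ for all $f\in S_n^{(3)}$. Then ${\rm G}_2\underline{a}={\rm G}_2\underline{b}$.
   Context: The split octonion algebra $\mathbf{O}$ is the 8-dimensional $\mathbb{F}$-vector space of formal matrices $a=\begin{pmatrix}\alpha&\mathbf{u}\\ \mathbf{v}&\beta\end{pmatrix}$ with $\alpha,\beta\in\mathbb{F}$, $\mathbf{u},\mathbf{v}\in\mathbb{F}^3$, with multiplication $\begin{pmatrix}\alpha&\mathbf{u}\\ \mathbf{v}&\beta\end{pmatrix}\begin{pmatrix}\alpha'&\mathbf{u}'\\ \mathbf{v}'&\beta'\end{pmatrix}=\begin{pmatrix}\alpha\alpha'+\mathbf{u}\cdot\mathbf{v}'&\alpha\mathbf{u}'+\beta'\mathbf{u}-\mathbf{v}\times\mathbf{v}'\\ \alpha'\mathbf{v}+\beta\mathbf{v}'+\mathbf{u}\times\mathbf{u}'&\beta\beta'+\mathbf{v}\cdot\mathbf{u}'\end{pmatrix}$ (dot product and cross product on $\mathbb{F}^3$). Trace $\mathrm{tr}(a)=\alpha+\beta$, norm $n(a)=\alpha\beta-\mathbf{u}\cdot\mathbf{v}$. With $\mathbf{c}_1$ the first standard basis vector of $\mathbb{F}^3$: $e_1$ has $\alpha=1$ and all else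 $0$, $e_2$ has $\beta=1$ and all else $0$, $\mathbf{u}_1$ has $\mathbf{u}=\mathbf{c}_1$ and all else $0$, $\mathbf{v}_1$ has $\mathbf{v}=\mathbf{c}_1$ and all else $0$. $\mathbb{M}=\left\{\begin{pmatrix}\alpha&(\gamma,0,0)\\(\delta,0,0)&\beta\end{pmatrix}\right\}\subseteq\mathbf{O}$ is the quaternion subalgebra. ${\rm G}_2=\mathrm{Aut}(\mathbf{O})$ acts diagonally on $\mathbf{O}^n$. $S_n^{(3)}$ is the set of functions on $\mathbf{O}^n$: $\underline{a}\mapsto n(a_i)$, $\underline{a}\mapsto\mathrm{tr}(a_i)$ ($1\le i\le n$), $\underline{a}\mapsto\mathrm{tr}(a_ia_j)$ ($1\le i<j\le n$), and $\underline{a}\mapsto\mathrm{tr}((a_ia_j)a_k)$ ($1\le i<j<k\le n$). *)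

From mathcomp Require Import all_boot all_order all_algebra.
Set Implicit Arguments. Unset Strict Implicit. Unset Printing Implicit Defensive.
Import GRing.Theory.
Local Open Scope ring_scope.

Record vec3 (F : Type) := V3 { x1 : F; x2 : F; x3 : F }.

Section Octonions.
Variable F : fieldType.

Definition vadd (u v : vec3 F) := V3 (x1 u + x1 v) (x2 u + x2 v) (x3 u + x3 v).
Definition vscale (c : F) (u : vec3 F) := V3 (c * x1 u) (c * x2 u) (c * x3 u).
Definition vneg (u : vec3 F) := V3 (- x1 u) (- x2 u) (- x3 u).
Definition vzero : vec3 F := V3 0 0 0.
Definition dot (u v : vec3 F) : F := x1 u * x1 v + x2 u * x2 v + x3 u * x3 v.
Definition cross (u v : vec3 F) : vec3 F :=
  V3 (x2 u * x3 v - x3 u * x2 v) (x3 u * x1 v - x1 u * x3 v) (x1 u * x2 v - x2 u * x1 v).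

(* Split octonion [alpha u ; v beta] *)
Record oct := Oct { oal : F; ou : vec3 F; ov : vec3 F; obe : F }.

Definition oadd (a b : oct) :=
  Oct (oal a + oal b) (vadd (ou a) (ou b)) (vadd (ov a) (ov b)) (obe a + obe b).
Definition oscale (c : F) (a : oct) :=
  Oct (c * oal a) (vscale c (ou a)) (vscale c (ov a)) (c * obe a).
Definition ozero : oct := Oct 0 vzero vzero 0.

Definition omul (a b : oct) : oct :=
  Oct (oal a * oal b + dot (ou a) (ov b))
      (vadd (vadd (vscale (oal a) (ou b)) (vscale (obe b) (ou a))) (vneg (cross (ov a) (ov b))))
      (vadd (vadd (vscale (oal b) (ov a)) (vscale (obe a) (ov b))) (cross (ou a) (ou b)))
      (obe a * obe b + dot (ov a) (ou b)).

Definition otr (a : oct) : F := oal a + obe a.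
Definition onorm (a : oct) : F := oal a * obe a - dot (ou a) (ov a).

Definition c1 : vec3 F := V3 1 0 0.
Definition e1 : oct := Oct 1 vzero vzero 0.
Definition e2 : oct := Oct 0 vzero vzero 1.
Definition uu1 : oct := Oct 0 c1 vzero 0.
Definition vv1 : oct := Oct 0 vzero c1 0.

(* the quaternion subalgebra M *)
Definition inM (a : oct) : Prop :=
  x2 (ou a) = 0 /\ x3 (ou a) = 0 /\ x2 (ov a) = 0 /\ x3 (ov a) = 0.

Definition is_G2 (g : oct -> oct) : Prop :=
  [/\ forall c x y, g (oadd (oscale c x) y) = oadd (oscale c (g x)) (g y),
      bijective g &
      forall x y, g (omul x y) = omul (g x) (g y)].

Definition G2orbit (n : nat) (a : 'I_n -> oct) : ('I_n -> oct) -> Prop :=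
  fun c => exists g, is_G2 g /\ forall i, c i = g (a i).

Definition S3_agree (n : nat) (a b : 'I_n -> oct) : Prop :=
  [/\ forall i, onorm (a i) = onorm (b i),
      forall i, otr (a i) = otr (b i),
      forall i j : 'I_n, (i < j)%N -> otr (omul (a i) (a j)) = otr (omul (b i) (b j)) &
      forall i j k : 'I_n, (i < j)%N -> (j < k)%N ->
        otr (omul (omul (a i) (a j)) (a k)) = otr (omul (omul (b i) (b j)) (b k))].

Definition a_std (n : nat) : 'I_n -> oct := fun i =>
  match nat_of_ord i with
  | 0 => e1 | 1 => e2 | 2 => uu1 | 3 => vv1 | _ => ozero end.

End Octonions.

From mathcomp Require Import all_boot all_order all_algebra.
From mathcomp Require Import ring.
Set Implicit Arguments. Unset Strict Implicit. Unset Printing Implicit Defensive.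
Import GRing.Theory.
Local Open Scope ring_scope.

(* In characteristic 2 a traceless singular 2x2 matrix is [[x y, x^2], [y^2, x y]],
   so over an algebraically closed field square roots turn (b_3, b_4), which has
   the invariants of (u_1, v_1), into (g u_1, g v_1) for some g in SL_2 acting on
   O by conjugation.  Every other b_i is then g a_i, since a quaternion x is
   recovered from tr x, tr (x u_1), tr (x v_1) and tr ((x u_1) v_1), and these
   are read off from the invariants of the triple (b_i, b_3, b_4). *)

(* [simpl] would also unfold the field operations, which is very slow here. *)
Ltac oct_unfold := cbv [otr onorm omul oadd oscale ozero dot cross vadd vscale
  vneg vzero e1 e2 uu1 vv1 c1 oal ou ov obe x1 x2 x3].

Lemma eq_of_mulr1 (R : ringType) (u x y : R) : u = 1 -> x * u = y -> x = y.
Proof. by move=> -> <-; rewrite mulr1. Qed.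

Section G2Orbits.
Variable F : fieldType.
Implicit Types g h : oct F -> oct F.

Lemma G2_comp g h : is_G2 g -> is_G2 h -> is_G2 (g \o h).
Proof.
case=> gZ gB gM [hZ hB hM]; split=> [c x y /=| | x y /=]; last by rewrite hM gM.
- by rewrite hZ gZ.
- exact: bij_comp.
Qed.

Lemma G2_inv g g' : is_G2 g -> cancel g g' -> cancel g' g -> is_G2 g'.
Proof.
case=> gZ _ gM gK g'K; split=> [c x y | | x y].
- by apply: (can_inj gK); rewrite gZ !g'K.
- by exists g.
- by apply: (can_inj gK); rewrite gM !g'K.
Qed.

Lemma G2orbit_eq n (a b : 'I_n -> oct F) g :
  is_G2 g -> (forall i, b i = g (a i)) -> forall c, G2orbit a c <-> G2orbit b c.
Proof.
move=> Gg bE c; have [g' gK g'K] : bijective g by case: Gg.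
split=> -[h [Gh cE]].
- exists (h \o g'); split=> [|i]; first exact/G2_comp/(G2_inv Gg).
  by rewrite cE bE /= gK.
- by exists (h \o g); split=> [|i]; [exact: G2_comp | rewrite cE bE].
Qed.

End G2Orbits.

Section TraceForms.
Variable F : fieldType.
Implicit Types x y z : oct F.

Lemma otr_mulC x y : otr (omul x y) = otr (omul y x).
Proof.
case: x => ? [? ? ?] [? ? ?] ?; case: y => ? [? ? ?] [? ? ?] ?.
by oct_unfold; ring.
Qed.

Lemma otr_mul3_cycle x y z : otr (omul (omul x y) z) = otr (omul (omul z x) y).
Proof.
case: x => ? [? ? ?] [? ? ?] ?; case: y => ? [? ? ?] [? ? ?] ?.
case: z => ? [? ? ?] [? ? ?] ?.
by oct_unfold; ring.
Qed.

Lemma S3_agree_triple n (a b : 'I_n -> oct F) (i j k : 'I_n) :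
  S3_agree a b -> (j < k)%N -> (i < j)%N || (k < i)%N ->
  [/\ otr (b i) = otr (a i),
      otr (omul (b i) (b j)) = otr (omul (a i) (a j)),
      otr (omul (b i) (b k)) = otr (omul (a i) (a k)) &
      otr (omul (omul (b i) (b j)) (b k)) = otr (omul (omul (a i) (a j)) (a k))].
Proof.
case=> _ bT bP bQ jk /orP[ij | ki]; split; try by rewrite bT.
- by rewrite bP.
- by rewrite bP // (ltn_trans ij jk).
- by rewrite bQ.
- by rewrite otr_mulC [RHS]otr_mulC bP // (ltn_trans jk ki).
- by rewrite otr_mulC [RHS]otr_mulC bP.
- by rewrite -otr_mul3_cycle -[RHS]otr_mul3_cycle bQ.
Qed.

End TraceForms.

Section Quaternions.
Variable F : fieldType.
Implicit Types x y : oct F.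

Definition quat (a c d e : F) : oct F := Oct a (V3 c 0 0) (V3 d 0 0) e.

Lemma inMP x : inM x -> x = quat (oal x) (x1 (ou x)) (x1 (ov x)) (obe x).
Proof. by case: x => a [c ? ?] [d ? ?] e [/= -> [-> [-> ->]]]. Qed.

Lemma otr_quat a c d e : otr (quat a c d e) = a + e.
Proof. by []. Qed.

Lemma onorm_quat a c d e : onorm (quat a c d e) = a * e - c * d.
Proof. by rewrite /quat; oct_unfold; ring. Qed.

Lemma otr_quat_uu1 a c d e : otr (omul (quat a c d e) (uu1 F)) = d.
Proof. by rewrite /quat; oct_unfold; ring. Qed.

Lemma otr_quat_vv1 a c d e : otr (omul (quat a c d e) (vv1 F)) = c.
Proof. by rewrite /quat; oct_unfold; ring. Qed.

Lemma otr_quat_uu1_vv1 a c d e :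
  otr (omul (omul (quat a c d e) (uu1 F)) (vv1 F)) = a.
Proof. by rewrite /quat; oct_unfold; ring. Qed.

Lemma quat_eq_of_otr x y : inM x -> inM y ->
  otr x = otr y ->
  otr (omul x (uu1 F)) = otr (omul y (uu1 F)) ->
  otr (omul x (vv1 F)) = otr (omul y (vv1 F)) ->
  otr (omul (omul x (uu1 F)) (vv1 F)) = otr (omul (omul y (uu1 F)) (vv1 F)) ->
  x = y.
Proof.
move=> /inMP -> /inMP ->.
rewrite !otr_quat !otr_quat_uu1 !otr_quat_vv1 !otr_quat_uu1_vv1 => tr_eq -> -> a_eq.
by rewrite a_eq in tr_eq *; rewrite (addrI _ tr_eq).
Qed.

End Quaternions.

Section Conjugation.
Variables (F : fieldType) (p q r s : F).

(* [cjij m11 m12 m21 m22] is the (i, j) entry of g M adj(g) for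
   g = [[p, q], [r, s]] and M = [[m11, m12], [m21, m22]]. *)
Definition cj11 (m11 m12 m21 m22 : F) := (p * m11 + q * m21) * s - (p * m12 + q * m22) * r.
Definition cj12 (m11 m12 m21 m22 : F) := - ((p * m11 + q * m21) * q) + (p * m12 + q * m22) * p.
Definition cj21 (m11 m12 m21 m22 : F) := (r * m11 + s * m21) * s - (r * m12 + s * m22) * r.
Definition cj22 (m11 m12 m21 m22 : F) := - ((r * m11 + s * m21) * q) + (r * m12 + s * m22) * p.

(* The embedding SL_2 -> G_2: g conjugates both the quaternion block
   [[alpha, u_1], [v_1, beta]] and the complementary block [[u_2, v_3], [-u_3, v_2]]. *)
Definition sl2_act (x : oct F) : oct F :=
  let a := oal x in let c := x1 (ou x) in let d := x1 (ov x) in let e := obe x in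
  let c2 := x2 (ou x) in let c3 := x3 (ou x) in let d2 := x2 (ov x) in let d3 := x3 (ov x) in
  Oct (cj11 a c d e)
      (V3 (cj12 a c d e) (cj11 c2 d3 (- c3) d2) (- cj21 c2 d3 (- c3) d2))
      (V3 (cj21 a c d e) (cj22 c2 d3 (- c3) d2) (cj12 c2 d3 (- c3) d2))
      (cj22 a c d e).

End Conjugation.

Section SL2Action.
Variables (F : fieldType) (p q r s : F).
Implicit Types x y : oct F.
Local Notation g := (sl2_act p q r s).

Lemma sl2_act_lin c x y : g (oadd (oscale c x) y) = oadd (oscale c (g x)) (g y).
Proof.
case: x => ? [? ? ?] [? ? ?] ?; case: y => ? [? ? ?] [? ? ?] ?.
rewrite /sl2_act /cj11 /cj12 /cj21 /cj22; oct_unfold.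
by congr Oct; [|congr V3|congr V3|]; ring.
Qed.

Lemma sl2_act_inM x : inM x -> inM (g x).
Proof.
move/inMP->; rewrite /inM /sl2_act /cj11 /cj12 /cj21 /cj22 /quat; oct_unfold.
by do !split; ring.
Qed.

Lemma sl2_act_uu1 : g (uu1 F) = quat (- (p * r)) (p ^+ 2) (- r ^+ 2) (p * r).
Proof.
rewrite /sl2_act /cj11 /cj12 /cj21 /cj22 /quat; oct_unfold.
by congr Oct; [|congr V3|congr V3|]; ring.
Qed.

Lemma sl2_act_vv1 : g (vv1 F) = quat (q * s) (- q ^+ 2) (s ^+ 2) (- (q * s)).
Proof.
rewrite /sl2_act /cj11 /cj12 /cj21 /cj22 /quat; oct_unfold.
by congr Oct; [|congr V3|congr V3|]; ring.
Qed.

Hypothesis det1 : p * s - q * r = 1.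

Lemma sl2_act_mul x y : g (omul x y) = omul (g x) (g y).
Proof.
case: x => ? [? ? ?] [? ? ?] ?; case: y => ? [? ? ?] [? ? ?] ?.
rewrite /sl2_act /cj11 /cj12 /cj21 /cj22; oct_unfold.
by congr Oct; [|congr V3|congr V3|]; apply: (eq_of_mulr1 det1); ring.
Qed.

Lemma sl2_act_otr x : otr (g x) = otr x.
Proof.
case: x => ? [? ? ?] [? ? ?] ?; rewrite /sl2_act /cj11 /cj22; oct_unfold.
by apply/esym/(eq_of_mulr1 det1); ring.
Qed.

Lemma sl2_actK : cancel g (sl2_act s (- q) (- r) p).
Proof.
have det1_sqr : (p * s - q * r) ^+ 2 = 1 by rewrite det1 expr1n.
case=> ? [? ? ?] [? ? ?] ?; rewrite /sl2_act /cj11 /cj12 /cj21 /cj22; oct_unfold.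
by congr Oct; [|congr V3|congr V3|]; apply/esym/(eq_of_mulr1 det1_sqr); ring.
Qed.

End SL2Action.

Section SL2InG2.
Variables (F : fieldType) (p q r s : F).
Hypothesis det1 : p * s - q * r = 1.
Local Notation g := (sl2_act p q r s).

Lemma sl2_actVK : cancel (sl2_act s (- q) (- r) p) g.
Proof.
have det1V : s * p - (- q) * (- r) = 1 by rewrite mulrNN mulrC.
by have := sl2_actK det1V; rewrite !opprK.
Qed.

Lemma sl2_act_G2 : is_G2 g.
Proof.
split; [exact: sl2_act_lin | | exact: sl2_act_mul].
by exists (sl2_act s (- q) (- r) p); [exact: sl2_actK | exact: sl2_actVK].
Qed.

Lemma sl2_act_eq_of_otr x y : inM x -> inM y ->
  otr x = otr y ->
  otr (omul x (g (uu1 F))) = otr (omul y (uu1 F)) ->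
  otr (omul x (g (vv1 F))) = otr (omul y (vv1 F)) ->
  otr (omul (omul x (g (uu1 F))) (g (vv1 F))) = otr (omul (omul y (uu1 F)) (vv1 F)) ->
  x = g y.
Proof.
move=> xM yM; rewrite -[x](sl2_actVK x).
rewrite -!(sl2_act_mul det1) !(sl2_act_otr det1) => tr_eq tr_u tr_v tr_uv.
congr sl2_act; apply: (quat_eq_of_otr _ yM tr_eq tr_u tr_v tr_uv).
exact: sl2_act_inM.
Qed.

End SL2InG2.

Lemma exists_sqrt (F : closedFieldType) (a : F) : exists x : F, x ^+ 2 = a.
Proof.
have [x xE] := @solve_monicpoly F 2 (nth 0 [:: a]) isT.
by exists x; rewrite xE !big_ord_recl big_ord0 /= mulr1 mul0r !addr0.
Qed.

Section Char2.
Variables (F : closedFieldType) (hchar : 2%N \in [pchar F]).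
Implicit Types x y : oct F.

Lemma sqrf_inj_pchar2 : injective (fun x : F => x ^+ 2).
Proof. exact: (fmorph_inj (pFrobenius_aut hchar)). Qed.

Lemma nilpotent_quat_pchar2 x : inM x -> otr x = 0 -> onorm x = 0 ->
  exists p r : F, x = quat (p * r) (p ^+ 2) (r ^+ 2) (p * r).
Proof.
move/inMP->; move: (oal x) (x1 (ou x)) (x1 (ov x)) (obe x) => a c d e.
rewrite otr_quat onorm_quat => /eqP; rewrite addr_eq0 oppr_pchar2 // => /eqP ->.
have [p <-] := exists_sqrt c; have [r <-] := exists_sqrt d.
move=> /eqP; rewrite subr_eq0 -expr2 -exprMn => /eqP /sqrf_inj_pchar2 ->.
by exists p, r.
Qed.

Lemma exists_sl2_act_uu1_vv1 x y : inM x -> inM y ->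
  otr x = 0 -> onorm x = 0 -> otr y = 0 -> onorm y = 0 -> otr (omul x y) = 1 ->
  exists p q r s : F, [/\ p * s - q * r = 1,
    x = sl2_act p q r s (uu1 F) & y = sl2_act p q r s (vv1 F)].
Proof.
move=> xM yM x_tr x_n y_tr y_n.
have [p [r ->]] := nilpotent_quat_pchar2 xM x_tr x_n.
have [q [s ->]] := nilpotent_quat_pchar2 yM y_tr y_n.
move=> xy_tr; exists p, q, r, s; split.
- rewrite oppr_pchar2 //; apply: sqrf_inj_pchar2; rewrite /= expr1n -xy_tr.
  by rewrite /quat; oct_unfold; ring.
- by rewrite sl2_act_uu1 !oppr_pchar2.
- by rewrite sl2_act_vv1 !oppr_pchar2.
Qed.

End Char2.

Lemma a_std_inM (F : fieldType) n (i : 'I_n) : inM (@a_std F n i).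
Proof. by rewrite /a_std; case: (nat_of_ord i) => [|[|[|[|m]]]]. Qed.

Theorem lemma7p8 (F : closedFieldType) (hchar : 2%N \in [pchar F]) (n : nat)
  (hn : (4 <= n)%N) (b : 'I_n -> oct F) (hbM : forall i, inM (b i))
  (hS : S3_agree (@a_std F n) b) :
  forall c, G2orbit (@a_std F n) c <-> G2orbit b c.
Proof.
pose i2 := Ordinal (ltnW hn); pose i3 := Ordinal hn.
have [bN bT bP _] := hS.
have [p [q [r [s [det1 b2E b3E]]]]] : exists p q r s : F, [/\ p * s - q * r = 1,
    b i2 = sl2_act p q r s (uu1 F) & b i3 = sl2_act p q r s (vv1 F)].
  apply: exists_sl2_act_uu1_vv1 => //.
  - by rewrite -bT; exact: addr0.
  - by rewrite -bN /onorm /dot /=; ring.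
  - by rewrite -bT; exact: addr0.
  - by rewrite -bN /onorm /dot /=; ring.
  - by rewrite -bP // /otr /omul /dot /=; ring.
have bE i : b i = sl2_act p q r s (a_std F i).
  have [/orP[]/eqP-> // | i_out] := boolP ((i == i2) || (i == i3)).
  have : (i < 2)%N || (3 < i)%N.
    by move: i_out; rewrite -!val_eqE /=; case: i => [[|[|[|[|m]]]] ?].
  case/(S3_agree_triple hS (isT : (i2 < i3)%N)) => tr_eq tr_u tr_v tr_uv.
  apply: (sl2_act_eq_of_otr det1 (hbM i) (a_std_inM F i) tr_eq).
  - by rewrite -b2E; exact: tr_u.
  - by rewrite -b3E; exact: tr_v.
  - by rewrite -b2E -b3E; exact: tr_uv.
exact: G2orbit_eq (sl2_act_G2 det1) bE.
Qed.
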